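(* Let $G$ be a graph and let $x$ be a vertex of odd degree in $G$ such that the subgraph induced by the neighbours of $x$ is a path $P$. Then in any proper $3$-colouring of $G$, the two end-points of $P$ receive the same colour.
   Context: A proper $3$-colouring assigns to each vertex one of three colours so that adjacent vertices receive different colours. *)

From mathcomp Require Import all_boot.
Set Implicit Arguments. Unset Strict Implicit. Unset Printing Implicit Defensive.

Definition simple_graph (T : finType) (e : rel T) : Prop :=
  symmetric e /\ irreflexive e.

Definition nbhd (T : finType) (e : rel T) (x : T) : {set T} := [set y | e x y].
Definition degree (T : finType) (e : rel T) (x : T) : nat := #|nbhd e x|.

Definition induced_path (T : finType) (e : rel T) (p : seq T) : Prop :=
  uniq p /\
  forall i j : 'I_(size p),
    e (tnth (in_tuple p) i) (tnth (in_tuple p) j) = (i.+1 == j) || (j.+1 == i).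

Definition induces_path (T : finType) (e : rel T) (S : {set T}) (p : seq T) : Prop :=
  induced_path e p /\ (forall y, (y \in p) = (y \in S)).

Definition proper_colouring (T : finType) (e : rel T) (k : nat) (c : T -> 'I_k) : Prop :=
  forall u v, e u v -> c u != c v.

(** The neighbours of [x] avoid the colour of [x], so along the path [P] they
    use only the two remaining colours, and adjacent ones differ: the colours
    alternate.  [P] has [deg x] vertices, an odd number, so its end-points are
    an even number of steps apart and get the same colour. *)

From mathcomp Require Import all_boot.

Set Implicit Arguments. Unset Strict Implicit. Unset Printing Implicit Defensive.

Lemma ord3_avoid_eq (z a b d : 'I_3) :
  a != z -> b != z -> d != z -> a != b -> b != d -> a = d.
Proof.
by move: z a b d; do 4!case=> [[|[|[|?]]] ?] //; move=> *; apply: val_inj.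
Qed.

(* Both parities are treated at once so that a one-step induction goes through. *)
Lemma last_alternating_ord3 (z a : 'I_3) (q : seq 'I_3) :
  all (predC1 z) (a :: q) -> path (fun u v => u != v) a q ->
  last a q = if odd (size q) then head a q else a.
Proof.
elim: q a => [//|b r IH] a /= /and3P[az bz rz] /andP[ab br].
rewrite (IH b) ?inE /= ?bz //.
case: ifP => //= odd_r; case: r odd_r rz br {IH} => [//|d r] _ /= /andP[dz _].
by move/andP=> [bd _]; rewrite (ord3_avoid_eq az bz dz ab bd).
Qed.

Lemma last_even_alternating_ord3 (z a : 'I_3) (q : seq 'I_3) :
  all (predC1 z) (a :: q) -> path (fun u v => u != v) a q ->
  ~~ odd (size q) -> last a q = a.
Proof. by move=> qz qpath /negPf even_q; rewrite (last_alternating_ord3 qz qpath) even_q. Qed.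

Section InducedPath.

Variables (T : finType) (e : rel T).

Lemma induced_path_path (y : T) (s : seq T) : induced_path e (y :: s) -> path e y s.
Proof.
move=> [_ adj]; apply/(pathP y) => i lt_i_s.
have lt_i : i < size (y :: s) by rewrite ltnW.
have := adj (Ordinal lt_i) (Ordinal (lt_i_s : i.+1 < size (y :: s))).
by rewrite !(tnth_nth y) /= eqxx.
Qed.

Lemma induces_path_card (S : {set T}) (p : seq T) :
  induces_path e S p -> #|S| = size p.
Proof.
move=> [[uniq_p _] memS]; rewrite -(card_uniqP uniq_p).
by apply: eq_card => y; rewrite memS.
Qed.

End InducedPath.

Theorem lemma1 (T : finType) (e : rel T) (x : T) (p : seq T) (c : T -> 'I_3) :
  simple_graph e ->
  odd (degree e x) ->
  induces_path e (nbhd e x) p ->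
  proper_colouring e c ->
  c (head x p) = c (last x p).
Proof.
move=> _ odd_deg nbhd_path proper.
have size_p : degree e x = size p by apply: induces_path_card nbhd_path.
case: p size_p nbhd_path => [//|y s] size_p [ys_path mem_ys] /=.
have avoid_cx : all (predC1 (c x)) (map c (y :: s)).
  apply/allP=> _ /mapP[v v_ys ->]; rewrite /= eq_sym proper //.
  by move: v_ys; rewrite mem_ys inE.
have colour_path : path (fun u v => u != v) (c y) (map c s).
  by rewrite path_map; apply: sub_path (induced_path_path ys_path) => u v /proper.
rewrite -last_map (last_even_alternating_ord3 avoid_cx colour_path) // size_map.
by rewrite size_p in odd_deg.
Qed.
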